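(* Let $(t^n)_{n=0}^{N_T}$ be a strictly increasing sequence of times and, for sequences $(z(n))_n$ in a vector space, let $\delta_t^{n+1}z:=(z(n+1)-z(n))/(t^{n+1}-t^n)$. Let, for $i=1,2,3$ and $n=0,\dots,N_T$, $\underline{\star_c\theta}^i_h(n)\in\underline X^2_{r,h}$ and $\underline{\star_cB}^i_h(n)\in\underline X^1_{r,h}$ (together with $\underline{\star_cD}^i_h(n)\in\underline X^1_{r,h}$) be a solution of the three-field scheme, so that in particular, for every $n$ and $i$, there is an element $\underline{\mathcal E}^i(n+1)\in\underline X^2_{r,h}$ (namely $N(n)\,\underline{\star_cE}^i_h(\underline{\star_cD}_h(n+1),\underline{\star_c\theta}_h(n))$, the same element in both equations) such that $$(\delta_t^{n+1}\underline{\star_c\theta}^i_h,\underline w_h)_{2,h}=(\underline{\mathcal E}^i(n+1),\underline w_h)_{2,h}\quad\forall\underline w_h\in\underline X^2_{r,h},$$ $$(\delta_t^{n+1}\underline{\star_cB}^i_h,\underline v_h)_{1,h}-(\underline{\mathcal E}^i(n+1),\underline d^1_{r,h}\underline v_h)_{2,h}=0\quad\forall\underline v_h\in\underline X^1_{r,h}.$$ Define, for $\underline u_h\in\underline X^1_{r,h}$ and $\underline p_h\in\underline X^0_{r,h}$, $$\mathfrak C^i_1(n,\underline u_h):=(\underline{\star_c\theta}^i_h(n),\underline d^1_{r,h}\underline u_h)_{2,h}-(\underline{\star_cB}^i_h(n),\underline u_h)_{1,h},\qquad \mathfrak C^i_2(n,\underline p_h):=(\underline{\star_cB}^i_h(n),\underline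 d^0_{r,h}\underline p_h)_{1,h}.$$ Then for every fixed $\underline u_h$ and $\underline p_h$, the quantities $\mathfrak C^i_1(n,\underline u_h)$ and $\mathfrak C^i_2(n,\underline p_h)$ are independent of $n\in\{0,\dots,N_T\}$.
   Context: $\underline X^k_{r,h}$, $k=0,1,2,3$, are the spaces of the exterior calculus discrete de Rham (ECDDR) complex of polynomial degree $r$ on a polytopal mesh of a domain in $\mathbb R^3$: finite-dimensional real vector spaces connected by linear discrete exterior derivatives $\underline d^k_{r,h}:\underline X^k_{r,h}\to\underline X^{k+1}_{r,h}$ satisfying the complex property $\underline d^{k+1}_{r,h}\circ\underline d^k_{r,h}=0$. Each $\underline X^k_{r,h}$ carries a discrete $L^2$-product $(\cdot,\cdot)_{k,h}$, a symmetric positive definite bilinear form (built from potential reconstructions plus a stabilisation term). $N(n)$ is the lapse at time $t^n$, and $\star_c$ denotes the constant Euclidean Hodge star of $\mathbb R^3$; the underlined symbols denote the discrete unknowns approximating $\star_c\theta^i$, $\star_cB^i$, $\star_cD^i$. *)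

From HB Require Import structures.
From mathcomp Require Import all_boot all_order all_algebra.
From mathcomp Require Export reals.
Set Implicit Arguments. Unset Strict Implicit. Unset Printing Implicit Defensive.
Import Order.TTheory GRing.Theory Num.Theory.
Local Open Scope ring_scope.

Definition L2_product (R : realType) (V : lmodType R) (ip : V -> V -> R) : Prop :=
  [/\ forall u v, ip u v = ip v u,
      forall (a : R) u v w, ip (a *: u + v) w = a * ip u w + ip v w
    & forall u, u != 0 -> 0 < ip u u].

Definition delta_t (R : realType) (V : lmodType R) (t : nat -> R) (z : nat -> V)
  (n : nat) : V := (t n.+1 - t n)^-1 *: (z n.+1 - z n).

Definition C1 (R : realType) (X1 X2 : lmodType R) (d1 : X1 -> X2)
  (ip1 : X1 -> X1 -> R) (ip2 : X2 -> X2 -> R)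
  (theta : nat -> X2) (B : nat -> X1) (n : nat) (u : X1) : R :=
  ip2 (theta n) (d1 u) - ip1 (B n) u.

Definition C2 (R : realType) (X0 X1 : lmodType R) (d0 : X0 -> X1)
  (ip1 : X1 -> X1 -> R) (B : nat -> X1) (n : nat) (p : X0) : R :=
  ip1 (B n) (d0 p).

(* Testing the B-equation with [d1 u] against the theta-equation with [w := d1 u]
   gives [(delta_t B, u)_1 = (delta_t theta, d1 u)_2], so each C1 step vanishes;
   testing it with [d0 p] kills the E-term because [d1 (d0 p) = 0], so each C2
   step vanishes. *)
From HB Require Import structures.
From mathcomp Require Import all_boot all_order all_algebra.
From mathcomp Require Import reals.
Import Order.TTheory GRing.Theory Num.Theory.
Local Open Scope ring_scope.

Section L2ProductTheory.
Variables (R : realType) (V : lmodType R) (ip : V -> V -> R).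
Hypothesis ipP : L2_product ip.

Lemma L2_product0l w : ip 0 w = 0.
Proof.
case: ipP => _ ipDl _.
have := ipDl 1 0 0 w; rewrite scaler0 addr0 mul1r => ip0D.
by apply: (addrI (ip 0 w)); rewrite addr0 -ip0D.
Qed.

Lemma L2_product0r w : ip w 0 = 0.
Proof. by case: ipP => ipC _ _; rewrite ipC L2_product0l. Qed.

Lemma L2_productZl a x w : ip (a *: x) w = a * ip x w.
Proof. by case: ipP => _ ipDl _; rewrite -[a *: x]addr0 ipDl L2_product0l addr0. Qed.

Lemma L2_productBl x y w : ip (x - y) w = ip x w - ip y w.
Proof.
case: ipP => _ ipDl _.
by rewrite -[x]scale1r ipDl mul1r scale1r -scaleN1r L2_productZl mulN1r.
Qed.

Lemma L2_product_delta_t (t : nat -> R) (z : nat -> V) n w :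
  ip (delta_t t z n) w = (t n.+1 - t n)^-1 * (ip (z n.+1) w - ip (z n) w).
Proof. by rewrite /delta_t L2_productZl L2_productBl. Qed.

End L2ProductTheory.

Lemma time_step_invr_neq0 {R : realType} {t : nat -> R} {n : nat} :
  t n < t n.+1 -> (t n.+1 - t n)^-1 != 0.
Proof. by move=> lt_t; rewrite invr_eq0 subr_eq0 gt_eqF. Qed.

Lemma stepwise_constant_eq {T : Type} (f : nat -> T) (NT : nat) :
  (forall n, (n < NT)%N -> f n.+1 = f n) ->
  forall n m, (n <= NT)%N -> (m <= NT)%N -> f n = f m.
Proof.
move=> f_step.
have f_eq0 n : (n <= NT)%N -> f n = f 0%N.
  by elim: n => [//|n IHn] lt_nNT; rewrite f_step // IHn // ltnW.
by move=> n m le_n le_m; rewrite f_eq0 // [RHS]f_eq0.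
Qed.

Theorem proposition6p1 (R : realType) (X0 X1 X2 X3 : vectType R)
  (d0 : {linear X0 -> X1}) (d1 : {linear X1 -> X2}) (d2 : {linear X2 -> X3})
  (Hcx0 : forall p : X0, d1 (d0 p) = 0) (Hcx1 : forall u : X1, d2 (d1 u) = 0)
  (ip1 : X1 -> X1 -> R) (ip2 : X2 -> X2 -> R)
  (Hip1 : L2_product ip1) (Hip2 : L2_product ip2)
  (NT : nat) (t : nat -> R) (Ht : forall n, (n < NT)%N -> t n < t n.+1)
  (theta : 'I_3 -> nat -> X2) (B : 'I_3 -> nat -> X1) (D : 'I_3 -> nat -> X1)
  (E : 'I_3 -> nat -> X2)
  (Htheta : forall (i : 'I_3) (n : nat), (n < NT)%N -> forall w : X2,
     ip2 (delta_t t (theta i) n) w = ip2 (E i n.+1) w)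
  (HB : forall (i : 'I_3) (n : nat), (n < NT)%N -> forall v : X1,
     ip1 (delta_t t (B i) n) v - ip2 (E i n.+1) (d1 v) = 0) :
  forall (i : 'I_3) (u : X1) (p : X0) (n m : nat), (n <= NT)%N -> (m <= NT)%N ->
    C1 d1 ip1 ip2 (theta i) (B i) n u = C1 d1 ip1 ip2 (theta i) (B i) m u /\
    C2 d0 ip1 (B i) n p = C2 d0 ip1 (B i) m p.
Proof.
move=> i u p n m le_n le_m; split.
- apply: (stepwise_constant_eq (C1 d1 ip1 ip2 (theta i) (B i) ^~ u) NT) => // k lt_k.
  have /eqP := HB i k lt_k u.
  rewrite -Htheta // subr_eq0 !L2_product_delta_t //.
  move=> /eqP /(mulfI (time_step_invr_neq0 (Ht k lt_k))) step_eq.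
  rewrite /C1 -[ip2 (theta i k.+1) _](subrK (ip2 (theta i k) (d1 u))) -step_eq.
  by rewrite addrAC [X in X + _]addrAC subrr add0r addrC.
- apply: (stepwise_constant_eq (C2 d0 ip1 (B i) ^~ p) NT) => // k lt_k.
  have := HB i k lt_k (d0 p).
  rewrite Hcx0 L2_product0r // subr0 L2_product_delta_t // => /eqP.
  rewrite mulf_eq0 (negbTE (time_step_invr_neq0 (Ht k lt_k))) subr_eq0.
  by move=> /eqP.
Qed.
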